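(* Let $i\ge1$, let $u$ be any word of length $n$ of type $(m_1,\dots,m_{i-1})$, and let $m_i$ be a positive integer with $c:=m_1+\dots+m_i\le n$. Then the sum, over all queues $q$ of capacity $c$ (i.e. over all $c$-element subsets of terminal sites), of the weight of $q$ with respect to $u$ equals \[ h_{n-c}(\underbrace{t_1,\dots,t_1}_{m_1},\underbrace{t_2,\dots,t_2}_{m_2},\dots,\underbrace{t_{i-1},\dots,t_{i-1}}_{m_{i-1}},\underbrace{t_i,\dots,t_i}_{m_i+1}), \] where $h_k$ denotes the complete homogeneous symmetric polynomial of degree $k$.
   Context: Fix a positive integer $n$; sites $1,\dots,n$ are arranged cyclically. A word is $w=w_1\cdots w_n\in\{1,2,\dots,\infty\}^n$; finite entries are particles (of size equal to the entry), entries $\infty$ are empty sites. A word has type $(m_1,\dots,m_{i-1})$ (positive integers) if it has exactly $m_j$ entries equal to $j$ for $1\le j\le i-1$ and all other entries $\infty$. Queues: a queue of capacity $c$ is a choice of $c$ of the $n$ sites, called terminal. Given the input word $u$ (finite entries in $\{1,\dots,i-1\}$), replace each $\infty$ by $i$; then the $n$ particles enter the queue one at a time in an order in which smaller particles come before larger ones (ties arbitrary). A particle at site $j$ first visits site $j$, then $j+1,j+2,\dots$ cyclically, stopping at (and occupying) the first terminal site not yet occupied; if all terminal sites are occupied it visits every site and is discarded. For each size $s\in\{1,\dots,i\}$ let $\alpha_s$ be the number of non-terminal sites whose first visitor has size $s$; the weight of $q$ with respect to $u$ is $\prod_{s=1}^{i} t_s^{\alpha_s}$ (independent of tie-breaking).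 *)

From mathcomp Require Import all_boot all_order all_algebra.
Set Implicit Arguments. Unset Strict Implicit. Unset Printing Implicit Defensive.
Import GRing.Theory.

(* Sites are 'I_n, arranged cyclically.  A word is a function
   'I_n -> option nat, with None standing for the entry oo (empty site). *)

Definition site n (j : 'I_n) (k : nat) : 'I_n := iter k (@ordS n) j.

(* State of the queue: set of occupied terminal sites, and for each site the
   size of its first visitor (None if not yet visited). *)
Definition qstate n := ({set 'I_n} * {ffun 'I_n -> option nat})%type.

(* One particle of size s starting at site j enters the queue q. *)
Definition qstep n (q : {set 'I_n}) (st : qstate n) (ps : 'I_n * nat)
  : qstate n :=
  let: (occ, fv) := st in
  let: (j, s) := ps in
  let stop k := (site j k \in q) && (site j k \notin occ) in
  (* index of the stopping site along the path, or n if discarded *)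
  let d := find stop (iota 0 n) in
  let visited x := has (fun k => (k <= d) && (site j k == x)) (iota 0 n) in
  let occ' := if d < n then site j d |: occ else occ in
  (occ', [ffun x => if fv x is Some s' then Some s'
                    else if visited x then Some s else None]).

Definition psize n (i : nat) (u : 'I_n -> option nat) (x : 'I_n) : nat :=
  odflt i (u x).

(* Order of entry: smaller particles first; ties broken by site index
   (the weight is independent of the tie-breaking). *)
Definition entry_order n (i : nat) (u : 'I_n -> option nat) : seq ('I_n * nat) :=
  flatten [seq [seq (x, s) | x <- enum 'I_n & psize i u x == s] | s <- iota 1 i].

Definition qfinal n (i : nat) (u : 'I_n -> option nat) (q : {set 'I_n}) : qstate n :=
  foldl (qstep q) (set0, [ffun => None]) (entry_order i u).

Definition alpha n (i : nat) (u : 'I_n -> option nat) (q : {set 'I_n}) (s : nat) : nat :=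
  #|[set x | (x \notin q) && ((qfinal i u q).2 x == Some s)]|.

Definition qweight (R : comNzRingType) (t : nat -> R) n (i : nat)
  (u : 'I_n -> option nat) (q : {set 'I_n}) : R :=
  (\prod_(1 <= s < i.+1) t s ^+ alpha i u q s)%R.

Definition has_type n (i : nat) (m : nat -> nat) (u : 'I_n -> option nat) : Prop :=
  (forall j, 1 <= j < i -> 0 < m j) /\
  (forall j, 1 <= j < i -> #|[set x | u x == Some j]| = m j) /\
  (forall x, match u x with None => true | Some j => 1 <= j < i end : Prop).

Definition hsym (R : comNzRingType) (k : nat) (xs : seq R) : R :=
  (\sum_(e : {ffun 'I_(size xs) -> 'I_k.+1} | \sum_(j < size xs) (e j : nat) == k)
     \prod_(j < size xs) xs`_j ^+ e j)%R.

From mathcomp Require Import all_boot all_order all_algebra.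
From mathcomp Require Import zify.
Import GRing.Theory.

(* Let the particles enter one at a time and record the occupied sites and the
   first visitor of each visited site.  Sum the final weight over the queues
   compatible with the current state that still have r unvisited terminal
   sites.  When r > 0 the next particle, of size s, passes g unvisited sites
   before occupying the first unvisited terminal one; these become non-terminal
   sites first visited by s, of weight t_s^g, and as the stopping site varies g
   takes every value below the number N of unvisited sites exactly once.  When
   r = 0 the particle visits all N remaining sites.  Hence the sum depends only
   on the sizes s_1, s_2, ... in order of entry and equals the sum of
   t_{s_1}^{g_1} ... t_{s_{c+1}}^{g_{c+1}} over g_1 + ... + g_{c+1} = n - c,
   i.e. h_{n-c}(t_{s_1}, ..., t_{s_{c+1}}); the first c + 1 particles have
   sizes 1^{m_1} ... (i-1)^{m_{i-1}} i^{m_i + 1}. *)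

Set Implicit Arguments.
Unset Strict Implicit.
Unset Printing Implicit Defensive.

Lemma site_val n (j : 'I_n) k : val (site j k) = (j + k) %% n.
Proof.
elim: k => [|k IH]; first by rewrite addn0 modn_small.
rewrite /site /= -/(site j k) IH.
by rewrite -(addn1 ((j + k) %% n)) modnDml addnS addn0 addnS.
Qed.

Lemma site_inj n (j : 'I_n) k1 k2 : k1 < n -> k2 < n -> site j k1 = site j k2 -> k1 = k2.
Proof.
move=> lt1 lt2 /(congr1 val); rewrite !site_val => /eqP.
by rewrite eqn_modDl !modn_small // => /eqP.
Qed.

Lemma site_onto n (j x : 'I_n) : exists k : 'I_n, site j k = x.
Proof.
have n_gt0 : 0 < n by apply: leq_ltn_trans (ltn_ord x).
exists (Ordinal (ltn_pmod (x + (n - j)) n_gt0)); apply: val_inj.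
rewrite site_val /= modnDmr addnCA subnKC; last exact: ltnW.
by rewrite modnDr modn_small.
Qed.

Lemma find_iotaP (p : pred nat) n d : d < n ->
  reflect (p d /\ forall l, l < d -> ~~ p l) (find p (iota 0 n) == d).
Proof.
move=> lt_dn; apply: (iffP eqP) => [find_d | [pd before_d]].
  have has_p : has p (iota 0 n) by rewrite has_find size_iota find_d.
  split; first by have := nth_find 0 has_p; rewrite find_d nth_iota.
  move=> l lt_ld; have lt_lf : l < find p (iota 0 n) by rewrite find_d.
  by have := before_find 0 lt_lf; rewrite nth_iota ?(ltn_trans lt_ld) // add0n => ->.
have has_p : has p (iota 0 n) by apply/hasP; exists d; rewrite ?mem_iota.
case: (ltngtP (find p (iota 0 n)) d) => // [lt_fd | lt_df].
  have := nth_find 0 has_p; rewrite nth_iota ?(ltn_trans lt_fd lt_dn) //.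
  by rewrite add0n (negbTE (before_d _ lt_fd)).
by have := before_find 0 lt_df; rewrite nth_iota ?add0n ?pd.
Qed.

Definition visited n (fv : {ffun 'I_n -> option nat}) : {set 'I_n} :=
  [set x | fv x != None].

Definition reached n (j : 'I_n) (d : nat) : {set 'I_n} :=
  [set x | has (fun k => (k <= d) && (site j k == x)) (iota 0 n)].

Lemma reachedP n (j x : 'I_n) d :
  reflect (exists2 k : 'I_n, k <= d & site j k = x) (x \in reached j d).
Proof.
rewrite inE; apply: (iffP hasP) => [[k] | [k le_kd <-]].
  rewrite mem_iota add0n => /andP[_ lt_kn] /andP[le_kd /eqP <-].
  by exists (Ordinal lt_kn).
by exists (val k); rewrite ?mem_iota ?ltn_ord ?le_kd ?eqxx.
Qed.

Lemma reached_site n (j k : 'I_n) d : k <= d -> site j k \in reached j d.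
Proof. by move=> le_kd; apply/reachedP; exists k. Qed.

Lemma reached_all n (j : 'I_n) d : n <= d.+1 -> reached j d = setT.
Proof.
move=> le_nd; apply/setP => x; rewrite in_setT; have [k <-] := site_onto j x.
by apply: reached_site; rewrite -ltnS (leq_trans (ltn_ord k)).
Qed.

Definition mark_visits n (j : 'I_n) (s d : nat) (fv : {ffun 'I_n -> option nat}) :
    {ffun 'I_n -> option nat} :=
  [ffun x => if fv x is Some s' then Some s'
             else if x \in reached j d then Some s else None].

Lemma visited_mark n (j : 'I_n) s d fv :
  visited (mark_visits j s d fv) = visited fv :|: reached j d.
Proof. by apply/setP => x; rewrite !inE ffunE; case: (fv x) => //=; rewrite inE; case: has. Qed.

Definition stop_index n (q occ : {set 'I_n}) (j : 'I_n) : nat :=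
  find (fun k => (site j k \in q) && (site j k \notin occ)) (iota 0 n).

Lemma qstepE n (q occ : {set 'I_n}) fv (j : 'I_n) s (d := stop_index q occ j) :
  qstep q (occ, fv) (j, s) =
  (if d < n then site j d |: occ else occ, mark_visits j s d fv).
Proof. by congr pair; apply/ffunP => x; rewrite !ffunE inE. Qed.

(* The queues [q] compatible with state [st]: a visited site is occupied iff
   it is terminal, and [r] terminal sites are still unvisited. *)
Definition admissible n (st : qstate n) (r : nat) (q : {set 'I_n}) : bool :=
  (q :&: visited st.2 == st.1) && (#|q :\: visited st.2| == r).

Lemma admissible0 n (occ : {set 'I_n}) fv q : occ \subset visited fv ->
  admissible (occ, fv) 0 q = (q == occ).
Proof.
move=> occV; rewrite /admissible /= cards_eq0 setD_eq0.
apply/idP/eqP => [/andP[/eqP <- /setIidPl //] | ->].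
by rewrite occV andbT; apply/eqP/setIidPl.
Qed.

Lemma stop_index_lt n (q occ : {set 'I_n}) fv (j : 'I_n) r :
  admissible (occ, fv) r.+1 q -> stop_index q occ j < n.
Proof.
case/andP => /= /eqP qV /eqP card_qV.
have /card_gt0P[x] : 0 < #|q :\: visited fv| by rewrite card_qV.
rewrite inE => /andP[xV xq]; have [k kx] := site_onto j x.
rewrite /stop_index -[n in _ < n](size_iota 0) -has_find; apply/hasP.
exists (val k); first by rewrite mem_iota ltn_ord.
by rewrite kx xq -qV inE (negbTE xV) andbF.
Qed.

Lemma stop_indexE n (q occ V : {set 'I_n}) (j k : 'I_n) : q :&: V = occ ->
  (stop_index q occ j == k) = ((q :\: V) :&: reached j k == [set site j k]).
Proof.
move=> qV; rewrite /stop_index.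
have stopE l : (site j l \in q) && (site j l \notin occ) = (site j l \in q :\: V).
  by rewrite -qV !inE; case: (site j l \in q); case: (site j l \in V).
rewrite (eq_find stopE); apply/(find_iotaP _ (ltn_ord k))/eqP => [[kqV before_k] | qVW].
  apply/setP => x; rewrite in_setI in_set1.
  apply/andP/eqP => [[xqV /reachedP[l le_lk lx]] | ->]; last by rewrite kqV reached_site.
  move: xqV le_lk; rewrite -lx leq_eqVlt => xqV /orP[/eqP/val_inj-> // | lt_lk].
  by move: xqV; rewrite (negbTE (before_k _ lt_lk)).
split; first by have := set11 (site j k); rewrite -qVW inE => /andP[].
move=> l lt_lk; apply/negP => lqV.
have lt_ln : l < n := ltn_trans lt_lk (ltn_ord k).
have lW : site j l \in reached j k.
  by apply/reachedP; exists (Ordinal lt_ln) => //; exact: ltnW.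
have : site j l \in [set site j k] by rewrite -qVW inE lqV lW.
rewrite in_set1 => /eqP/site_inj => /(_ lt_ln (ltn_ord k)) eq_lk.
by rewrite eq_lk ltnn in lt_lk.
Qed.

Lemma setIUr_split (T : finType) (q V W : {set T}) :
  q :&: (V :|: W) = (q :&: V) :|: ((q :\: V) :&: W).
Proof. by apply/setP => x; rewrite !inE; case: (x \in q); case: (x \in V). Qed.

Lemma occupied_step (T : finType) (q occ V W : {set T}) x0 :
  occ \subset V -> x0 \notin V ->
  (q :&: V == occ) && ((q :\: V) :&: W == [set x0]) = (q :&: (V :|: W) == x0 |: occ).
Proof.
move=> /subsetP occV x0V; apply/andP/eqP => [[/eqP qV /eqP qVW] | qVW].
  by rewrite setIUr_split qV qVW setUC.
have -> : q :&: V = (q :&: (V :|: W)) :&: V.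
  by apply/setP => x; rewrite !inE; case: (x \in V); rewrite ?andbF ?andbT.
have -> : (q :\: V) :&: W = (q :&: (V :|: W)) :\: V.
  by apply/setP => x; rewrite !inE; case: (x \in V); rewrite ?andbF.
rewrite qVW; split; apply/eqP/setP => x; rewrite !inE.
  have [-> | _] := eqVneq x x0.
    by rewrite (negbTE x0V); apply/esym/negP => /occV; apply/negP.
  by case: (boolP (x \in occ)) => [/occV -> | _]; rewrite ?andbF.
have [-> | _] := eqVneq x x0; first by rewrite x0V.
by case: (boolP (x \in occ)) => [/occV -> | _]; rewrite ?andbF.
Qed.

Lemma card_unoccupied_step (T : finType) (q occ V W : {set T}) x0 :
  occ \subset V -> x0 \notin V -> x0 \in W -> q :&: (V :|: W) = x0 |: occ ->
  #|q :\: V| = #|q :\: (V :|: W)|.+1.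
Proof.
move=> /subsetP occV x0V x0W qVW.
have x0q : x0 \in q by have := setU11 x0 occ; rewrite -qVW inE => /andP[].
suff -> : q :\: V = x0 |: (q :\: (V :|: W)) by rewrite cardsU1 !inE x0W orbT.
apply/setP => x; rewrite !inE.
have [-> | ne_x] := eqVneq x x0; first by rewrite x0q x0V.
case: (boolP (x \in W)) => xW; rewrite ?orbT ?orbF //=.
apply/negP => /andP[xV xq].
have : x \in q :&: (V :|: W) by rewrite !inE xq xW orbT.
by rewrite qVW !inE (negbTE ne_x) /= => /occV; rewrite (negbTE xV).
Qed.

Lemma admissible_step n (q occ : {set 'I_n}) fv (j k : 'I_n) s r :
  occ \subset visited fv ->
  admissible (occ, fv) r.+1 q && (stop_index q occ j == k) =
  (site j k \notin visited fv) && admissible (site j k |: occ, mark_visits j s k fv) r q.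
Proof.
move=> occV; rewrite /admissible /= visited_mark.
set V := visited fv; set W := reached j k; set x0 := site j k.
have x0W : x0 \in W := reached_site j (leqnn k).
apply/idP/idP.
  case/andP => /andP[/eqP qV /eqP card_qV]; rewrite (stop_indexE j k qV) => qVW.
  have x0V : x0 \notin V.
    by have := set11 x0; rewrite -(eqP qVW) !inE => /andP[/andP[]].
  have qVW' : q :&: (V :|: W) = x0 |: occ.
    by apply/eqP; rewrite -occupied_step // qV eqxx.
  rewrite x0V qVW' eqxx /=; apply/eqP/succn_inj; rewrite -card_qV.
  exact/esym/(card_unoccupied_step occV x0V x0W qVW').
case/andP => x0V /andP[/eqP qVW /eqP card_qVW].
have /andP[/eqP qV qVW'] : (q :&: V == occ) && ((q :\: V) :&: W == [set x0]).
  by rewrite occupied_step // qVW.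
rewrite qV (card_unoccupied_step occV x0V x0W qVW) -/V card_qVW.
by rewrite (stop_indexE j k qV) -/W -/x0 qVW' !eqxx.
Qed.

Section CompleteHomogeneous.

Variable R : comNzRingType.
Local Open Scope ring_scope.

Fixpoint hrec (k : nat) (xs : seq R) : R :=
  if xs is x :: xs' then \sum_(g < k.+1) x ^+ g * hrec (k - g)%N xs' else (k == 0)%:R.

(* The bound [K] on the exponents is irrelevant once it is at least [k]; this
   is what lets [hsym] unfold along its first variable. *)
Lemma hsum_bounded (K k : nat) (xs : seq R) : (k <= K)%N ->
  \sum_(e : {ffun 'I_(size xs) -> 'I_K.+1} | \sum_(j < size xs) (e j : nat) == k)
     \prod_(j < size xs) xs`_j ^+ e j = hrec k xs.
Proof.
elim: xs k => [|x xs IH] k le_kK /=.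
  rewrite big_mkcond (big_pred1 [ffun _ => ord0]) => [|e]; last first.
    by apply/esym/eqP/ffunP => -[].
  by rewrite !big_ord0; case: k {le_kK}.
pose split_ff (e : {ffun 'I_(size xs).+1 -> 'I_K.+1}) := (e ord0, [ffun j => e (lift ord0 j)]).
pose join_ff (p : 'I_K.+1 * {ffun 'I_(size xs) -> 'I_K.+1}) :=
  [ffun j => if unlift ord0 j is Some j' then p.2 j' else p.1].
have join_ffK : cancel join_ff split_ff.
  move=> [g e]; rewrite /split_ff /join_ff /= ffunE unlift_none.
  by congr pair; apply/ffunP => j; rewrite !ffunE liftK.
have split_ffK : cancel split_ff join_ff.
  move=> e; apply/ffunP => j; rewrite /join_ff /split_ff ffunE /=.
  by case: unliftP => [j'|] ->; rewrite ?ffunE.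
rewrite (reindex join_ff); last by apply: onW_bij; exists split_ff.
have sum_join p : \sum_(j < (size xs).+1) (join_ff p j : nat) =
                  (p.1 + \sum_(j < size xs) (p.2 j : nat))%N.
  rewrite big_ord_recl /join_ff ffunE unlift_none; congr addn.
  by apply: eq_bigr => j _; rewrite ffunE liftK.
have prod_join p : \prod_(j < (size xs).+1) (x :: xs)`_j ^+ join_ff p j =
                   x ^+ p.1 * \prod_(j < size xs) xs`_j ^+ p.2 j.
  rewrite big_ord_recl /join_ff ffunE unlift_none; congr (_ * _).
  by apply: eq_bigr => j _; rewrite ffunE liftK.
rewrite (eq_bigl _ _ (fun p => congr1 (eq_op^~ k) (sum_join p))).
rewrite (eq_bigr _ (fun p _ => prod_join p)) -(pair_big_dep xpredT
  (fun (g : 'I_K.+1) (e : {ffun 'I_(size xs) -> 'I_K.+1}) =>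
     g + \sum_(j < size xs) (e j : nat) == k)%N
  (fun g e => x ^+ g * \prod_(j < size xs) xs`_j ^+ e j)) /=.
rewrite (eq_bigr (fun g : 'I_K.+1 => if (g <= k)%N then x ^+ g * hrec (k - g) xs else 0));
  last first.
  move=> g _; rewrite -big_distrr /=; case: leqP => [le_gk | lt_kg].
    rewrite -IH ?(leq_trans (leq_subr _ _)) //; congr (_ * _); apply: eq_bigl => e.
    by rewrite -[RHS](eqn_add2l g) subnKC.
  rewrite big_pred0 ?mulr0 // => e; apply/negbTE; rewrite neq_ltn.
  by rewrite (leq_trans lt_kg) ?leq_addr ?orbT.
by rewrite -big_mkcond /= (big_ord_narrow_leq le_kK).
Qed.

Lemma hsym_nil k : hsym k ([::] : seq R) = (k == 0)%:R.
Proof. by rewrite /hsym hsum_bounded. Qed.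

Lemma hsym_cons k (x : R) xs :
  hsym k (x :: xs) = \sum_(g < k.+1) x ^+ g * hsym (k - g) xs.
Proof.
rewrite /hsym hsum_bounded //=; apply: eq_bigr => g _.
by rewrite hsum_bounded.
Qed.

Lemma hsym0 (xs : seq R) : hsym 0 xs = 1.
Proof. by elim: xs => [|x xs IH]; rewrite ?hsym_nil // hsym_cons big_ord1 IH mulr1. Qed.

Lemma hsym_seq1 k (x : R) : hsym k [:: x] = x ^+ k.
Proof.
rewrite hsym_cons big_ord_recr /= subnn hsym_nil mulr1 big1 ?add0r // => g _.
by rewrite hsym_nil subn_eq0 leqNgt ltn_ord mulr0.
Qed.

End CompleteHomogeneous.

Section SkipPoly.

Variables (R : comNzRingType) (tt : nat -> R).
Local Open Scope ring_scope.

(* [skip_poly tt ss r N]: the particles of sizes [ss] enter a queue with [N]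
   unvisited sites, [r] of them terminal.  Each of the next [r] particles, of
   size s, passes g unvisited sites (weight [tt s ^+ g]) before occupying one;
   the particle after them visits every remaining site. *)
Fixpoint skip_poly (ss : seq nat) (r N : nat) : R :=
  match ss, r with
  | [::], _ => (r == 0)%:R
  | s :: _, 0 => tt s ^+ N
  | s :: ss', r'.+1 => \sum_(g < N) tt s ^+ g * skip_poly ss' r' (N - g.+1)
  end.

Lemma skip_poly00 ss : skip_poly ss 0 0 = 1.
Proof. by case: ss. Qed.

Lemma skip_poly_small ss r N : (N < r)%N -> skip_poly ss r N = 0.
Proof.
elim: ss r N => [|s ss IH] [|r] N //= lt_Nr.
by rewrite big1 // => g _; rewrite IH ?mulr0 //; have := ltn_ord g; lia.
Qed.

Lemma skip_poly_hsym ss r N :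
  (r <= N <= size ss)%N -> skip_poly ss r N = hsym (N - r) (map tt (take r.+1 ss)).
Proof.
elim: ss r N => [|s ss IH] r N /=.
  by case: N => [|N]; [case: r => // _; rewrite hsym0 | rewrite andbF].
case: r => [_ | r /andP[lt_rN le_Ns]]; first by rewrite subn0 take0 hsym_seq1.
rewrite hsym_cons subnSK // -(big_mkord xpredT (fun g => tt s ^+ g * skip_poly ss r (N - g.+1))).
rewrite (big_cat_nat _ (leq_subr r N)) //= [X in _ + X]big_nat_cond [X in _ + X]big1 ?addr0.
  rewrite big_mkord; apply: eq_bigr => g _; rewrite IH; last by have := ltn_ord g; lia.
  by congr (_ * hsym _ _); lia.
by move=> g /andP[/andP[le_g lt_gN] _]; rewrite skip_poly_small ?mulr0 //; lia.
Qed.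

End SkipPoly.

(* [k |-> #{l <= k | b l}] maps [{k < m | b k}] bijectively onto [1, #b]. *)
Lemma sum_by_rank (V : nmodType) (b : nat -> bool) (F : nat -> V) m :
  (\sum_(0 <= k < m | b k) F (\sum_(0 <= l < k.+1) (b l : nat)) =
   \sum_(0 <= a < \sum_(0 <= l < m) (b l : nat)) F a.+1)%R.
Proof.
elim: m => [|m IH]; first by rewrite !big_geq.
rewrite big_mkcond big_nat_recr //= -big_mkcond IH.
have -> : \sum_(0 <= l < m.+1) (b l : nat) = (\sum_(0 <= l < m) (b l : nat) + b m)%N.
  by rewrite big_nat_recr.
case: (b m) => /=; last by rewrite GRing.addr0 addn0.
by rewrite addn1 big_nat_recr.
Qed.

Lemma card_unvisited_reached n (j : 'I_n) (V : {set 'I_n}) k : k < n ->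
  #|~: V :&: reached j k| = \sum_(0 <= l < k.+1) (site j l \notin V).
Proof.
move=> lt_kn.
have -> : ~: V :&: reached j k =
          [set site j l | l : 'I_n in [pred l : 'I_n | l <= k & site j l \notin V]].
  apply/setP => x; rewrite in_setI in_setC.
  apply/andP/imsetP => [[xV /reachedP[l le_lk lx]] | [l]].
    by exists l; rewrite ?inE ?le_lk ?lx.
  by rewrite inE => /andP[le_lk lV] ->; rewrite lV reached_site.
rewrite card_imset; last by move=> l1 l2 /site_inj eq12; apply/val_inj/eq12.
rewrite -sum1_card big_mkcond -(big_mkord xpredT (fun l => (l <= k) && (site j l \notin V) : nat)).
rewrite (big_cat_nat _ lt_kn) //= [X in _ + X]big_nat_cond [X in _ + X]big1 ?addn0.
  by apply: eq_big_nat => l /andP[_]; rewrite ltnS => ->.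
by move=> l /andP[/andP[lt_kl _] _]; rewrite leqNgt lt_kl.
Qed.

Lemma card_unvisited n (j : 'I_n) (V : {set 'I_n}) :
  #|~: V| = \sum_(0 <= l < n) (site j l \notin V).
Proof.
have n_gt0 : 0 < n := leq_ltn_trans (leq0n j) (ltn_ord j).
rewrite -(setIT (~: V)) -(reached_all j (_ : n <= n.-1.+1)) ?prednK //.
by rewrite card_unvisited_reached ?prednK // ltn_predL.
Qed.

Section QueueSum.

Variables (R : comNzRingType) (f : option nat -> R) (n : nat).
Hypothesis f_None : f None = 1%R.

Local Open Scope ring_scope.

Definition final_weight (q : {set 'I_n}) (st : qstate n) (ps : seq ('I_n * nat)) : R :=
  \prod_(x | x \notin q) f ((foldl (qstep q) st ps).2 x).

Definition state_weight (st : qstate n) : R := \prod_(x | x \notin st.1) f (st.2 x).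

Lemma prod_mark_visits (O : {set 'I_n}) j s d fv :
  \prod_(x | x \notin O) f (mark_visits j s d fv x) =
  \prod_(x | x \notin O) f (fv x) *
    f (Some s) ^+ #|~: O :&: (~: visited fv :&: reached j d)|.
Proof.
rewrite (eq_bigr (fun x => f (fv x) *
  if x \in ~: visited fv :&: reached j d then f (Some s) else 1)); last first.
  move=> x _; rewrite ffunE !inE; case: (fv x) => [a|] /=; first by rewrite mulr1.
  by case: has; rewrite f_None ?mul1r ?mulr1.
rewrite big_split /= -big_mkcondr -prodr_const; congr (_ * _).
by apply: eq_bigl => x; rewrite !inE.
Qed.

Lemma state_weight_step (occ : {set 'I_n}) fv (j k : 'I_n) s :
  occ \subset visited fv -> site j k \notin visited fv ->
  state_weight (site j k |: occ, mark_visits j s k fv) =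
  state_weight (occ, fv) * f (Some s) ^+ #|~: visited fv :&: reached j k|.-1.
Proof.
move=> /subsetP occV x0V; rewrite /state_weight /= prod_mark_visits.
have x0occ : site j k \notin occ by apply: contra x0V; apply: occV.
congr (_ * _ ^+ _).
  rewrite [RHS](bigD1 (site j k)) //=; move: x0V; rewrite inE negbK => /eqP->.
  by rewrite f_None mul1r; apply: eq_bigl => x; rewrite in_setU1 negb_or andbC.
rewrite (cardsD1 (site j k) (~: visited fv :&: reached j k)) in_setI in_setC x0V.
rewrite reached_site //=; apply: eq_card => x.
rewrite !inE negb_or; have [-> | ne_x] //= := eqVneq x (site j k).
by case: (boolP (x \in occ)) => [/occV | //]; rewrite inE => ->.
Qed.

Lemma card_unvisited_step fv (j : 'I_n) s k :
  #|~: visited (mark_visits j s k fv)| =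
  (#|~: visited fv| - #|~: visited fv :&: reached j k|)%N.
Proof.
by rewrite visited_mark setCU -(cardsID (reached j k) (~: visited fv)) setDE addKn.
Qed.

Lemma final_weight_cons q st p ps :
  final_weight q st (p :: ps) = final_weight q (qstep q st p) ps.
Proof. by []. Qed.

Definition queue_sum_formula (ps : seq ('I_n * nat)) : Prop :=
  forall (occ : {set 'I_n}) fv r, occ \subset visited fv -> (r <= size ps)%N ->
  \sum_(q | admissible (occ, fv) r q) final_weight q (occ, fv) ps =
  state_weight (occ, fv) * skip_poly (f \o Some) (map snd ps) r #|~: visited fv|.

Lemma queue_sum_nil : queue_sum_formula [::].
Proof.
move=> occ fv r occV; rewrite leqn0 => /eqP->.
by rewrite (big_pred1 occ) => [|q]; [rewrite /= mulr1n mulr1 | exact: admissible0].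
Qed.

Lemma queue_sum_cons0 j s ps (occ : {set 'I_n}) fv :
  queue_sum_formula ps -> occ \subset visited fv ->
  \sum_(q | admissible (occ, fv) 0 q) final_weight q (occ, fv) ((j, s) :: ps) =
  state_weight (occ, fv) * f (Some s) ^+ #|~: visited fv|.
Proof.
move=> IH occV; rewrite (big_pred1 occ) => [|q]; last exact: admissible0.
have stop_n : stop_index occ occ j = n.
  by rewrite /stop_index hasNfind ?size_iota //; apply/hasPn => k _; rewrite andbN.
have reached_n : reached j n = setT := reached_all j (leqnSn n).
have all_visited : visited (mark_visits j s n fv) = setT.
  by rewrite visited_mark reached_n setUT.
have occV' : occ \subset visited (mark_visits j s n fv) by rewrite all_visited subsetT.
rewrite final_weight_cons qstepE stop_n ltnn.
have := IH occ _ 0 occV' (leq0n _); rewrite (big_pred1 occ) => [->|q]; last exact: admissible0.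
rewrite all_visited setCT cards0 skip_poly00 mulr1 /state_weight /= prod_mark_visits.
by rewrite reached_n setIT (setIidPr _) // setCS.
Qed.

Lemma sum_stop_at j s ps r (k : 'I_n) (occ : {set 'I_n}) fv :
  queue_sum_formula ps -> occ \subset visited fv -> (r <= size ps)%N ->
  \sum_(q | admissible (occ, fv) r.+1 q && (stop_index q occ j == k))
     final_weight q (occ, fv) ((j, s) :: ps) =
  if site j k \notin visited fv then
    state_weight (occ, fv) *
      (f (Some s) ^+ #|~: visited fv :&: reached j k|.-1 *
       skip_poly (f \o Some) (map snd ps) r
         (#|~: visited fv| - #|~: visited fv :&: reached j k|))
  else 0.
Proof.
move=> IH occV le_r.
set occ' := site j k |: occ; set fv' := mark_visits j s k fv.
have stepE q : admissible (occ, fv) r.+1 q && (stop_index q occ j == k) =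
               (site j k \notin visited fv) && admissible (occ', fv') r q.
  exact: admissible_step.
case: ifPn => [x0V | x0V]; last by rewrite big_pred0 // => q; rewrite stepE (negbTE x0V).
rewrite (eq_big (admissible (occ', fv') r) (fun q => final_weight q (occ', fv') ps)).
- have occV' : occ' \subset visited fv'.
    rewrite visited_mark subUset sub1set inE reached_site ?orbT //=.
    exact: subset_trans occV (subsetUl _ _).
  by rewrite IH // state_weight_step // card_unvisited_step mulrA.
- by move=> q; rewrite stepE x0V.
by move=> q /andP[_ /eqP stop_k]; rewrite final_weight_cons qstepE stop_k ltn_ord.
Qed.

Lemma queue_sum_consS j s ps r (occ : {set 'I_n}) fv :
  queue_sum_formula ps -> occ \subset visited fv -> (r <= size ps)%N ->
  \sum_(q | admissible (occ, fv) r.+1 q) final_weight q (occ, fv) ((j, s) :: ps) =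
  state_weight (occ, fv) * \sum_(g < #|~: visited fv|)
    f (Some s) ^+ g * skip_poly (f \o Some) (map snd ps) r (#|~: visited fv| - g.+1).
Proof.
move=> IH occV le_r; set V := visited fv; set N := #|~: V|.
pose F m := f (Some s) ^+ m.-1 * skip_poly (f \o Some) (map snd ps) r (N - m).
rewrite (partition_big (fun q => insubd j (stop_index q occ j) : 'I_n) xpredT) //=.
rewrite (eq_bigr (fun k : 'I_n => if site j k \notin V then
    state_weight (occ, fv) * F #|~: V :&: reached j k| else 0)); last first.
  move=> k _; rewrite -(sum_stop_at j s k IH occV le_r); apply: eq_bigl => q.
  case adm: (admissible _ _ q) => //=.
  by rewrite -val_eqE val_insubd (stop_index_lt j adm).
rewrite -big_mkcond -big_distrr /=; congr (_ * _).
rewrite (eq_bigr (fun k : 'I_n => F (\sum_(0 <= l < k.+1) (site j l \notin V : nat))));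
  last by move=> k _; rewrite card_unvisited_reached.
rewrite -(big_mkord (fun k => site j k \notin V)
                    (fun k => F (\sum_(0 <= l < k.+1) (site j l \notin V : nat)))).
by rewrite sum_by_rank -card_unvisited big_mkord.
Qed.

Lemma queue_sum ps : queue_sum_formula ps.
Proof.
elim: ps => [|[j s] ps IH]; first exact: queue_sum_nil.
move=> occ fv [|r] occV le_r; first exact: queue_sum_cons0.
exact: queue_sum_consS.
Qed.

End QueueSum.

Lemma sum_nat_of_bool (T : finType) (b : pred T) : \sum_(x : T) (b x : nat) = #|b|.
Proof.
by rewrite -sum1_card [RHS]big_mkcond; apply: eq_bigr => x _; rewrite unfold_in; case: (b x).
Qed.

Definition size_weight (R : comNzRingType) (t : nat -> R) (i : nat) (o : option nat) : R :=
  if o is Some s then if 1 <= s <= i then t s else 1%R else 1%R.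

Lemma prod_size_weight (R : comNzRingType) (t : nat -> R) i n
    (g : 'I_n -> option nat) (q : {set 'I_n}) :
  (\prod_(1 <= s < i.+1) t s ^+ #|[set x | (x \notin q) && (g x == Some s)]| =
   \prod_(x | x \notin q) size_weight t i (g x))%R.
Proof.
rewrite [RHS](eq_bigr (fun x => \prod_(1 <= s < i.+1) if g x == Some s then t s else 1)%R).
  rewrite exchange_big /=; apply: eq_bigr => s _.
  by rewrite -big_mkcondr -prodr_const; apply: eq_bigl => x; rewrite inE.
move=> x _; case: (g x) => [a|] /=; last by rewrite big1.
rewrite (eq_bigr (fun s => if s == a then t s else 1%R)); last by move=> s _; rewrite eq_sym.
by rewrite -big_mkcond big_nat1_eq ltnS.
Qed.

Definition empty_queue n : qstate n := (set0, [ffun => None]).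

Lemma visited_empty n : visited (empty_queue n).2 = set0.
Proof. by apply/setP => x; rewrite !inE ffunE. Qed.

Lemma qweightE (R : comNzRingType) (t : nat -> R) n i (u : 'I_n -> option nat) q :
  qweight t i u q = final_weight (size_weight t i) q (empty_queue n) (entry_order i u).
Proof. exact: prod_size_weight. Qed.

Lemma admissible_empty n c (q : {set 'I_n}) : admissible (empty_queue n) c q = (#|q| == c).
Proof. by rewrite /admissible visited_empty setI0 eqxx setD0. Qed.

Lemma state_weight_empty (R : comNzRingType) (f : option nat -> R) n :
  f None = 1%R -> state_weight f (empty_queue n) = 1%R.
Proof. by move=> f_None; rewrite /state_weight big1 // => x _; rewrite ffunE. Qed.

Lemma entry_order_sizes n i (u : 'I_n -> option nat) :
  map snd (entry_order i u) =
  flatten [seq nseq #|[pred x | psize i u x == s]| s | s <- iota 1 i].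
Proof.
rewrite /entry_order map_flatten -map_comp; congr flatten; apply: eq_map => s /=.
have map_const (l : seq 'I_n) : [seq s | _ <- l] = nseq (size l) s by elim: l => //= x l ->.
rewrite -map_comp map_const size_filter -sum1_count big_enum_cond /= -sum1_card.
by congr nseq; apply: eq_bigl => x; rewrite inE.
Qed.

Section WordOfType.

Variables (n i : nat) (m : nat -> nat) (u : 'I_n -> option nat).
Hypothesis u_type : has_type i.+1 m u.

Let K := \sum_(1 <= s < i.+1) m s.

Lemma card_sites_of_size s : 1 <= s <= i ->
  #|[pred x | psize i.+1 u x == s]| = m s.
Proof.
move=> s_range; have [_ [<- // _]] := u_type; apply: eq_card => x.
rewrite inE unfold_in /= /psize; case: (u x) => [a|] //=.
by case/andP: s_range => _ le_si; rewrite eq_sym (ltn_eqF (le_si : s < i.+1)).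
Qed.

Lemma card_empty_sites : #|[pred x | psize i.+1 u x == i.+1]| = n - K.
Proof.
have [_ [card_m u_range]] := u_type.
have one_size x : (u x == None) + \sum_(1 <= s < i.+1) (u x == Some s) = 1.
  have := u_range x; case: (u x) => [a a_range | _] /=; last by rewrite big1.
  rewrite (eq_bigr (fun s => if s == a then 1 else 0)); last first.
    by move=> s _; have -> : (Some a == Some s) = (s == a) by apply/eqP/eqP => [[->] | ->].
  by rewrite -big_mkcond big_nat1_eq a_range.
have sum_sizes : \sum_(1 <= s < i.+1) \sum_x (u x == Some s : nat) = K.
  apply: eq_big_nat => s s_range; rewrite sum_nat_of_bool -card_m //.
  by apply: eq_card => x; rewrite inE.
have n_split : n = #|[pred x | u x == None]| + K.
  rewrite -[LHS]card_ord -sum1_card (eq_bigr _ (fun x _ => esym (one_size x))).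
  by rewrite big_split /= exchange_big /= sum_sizes sum_nat_of_bool.
rewrite [X in X - K]n_split addnK.
apply: eq_card => x; rewrite !unfold_in /= /psize.
by have := u_range x; case: (u x) => [a /andP[_ lt_ai] | _] /=; rewrite ?(ltn_eqF lt_ai) ?eqxx.
Qed.

Lemma entry_sizes_of_type :
  map snd (entry_order i.+1 u) = flatten [seq nseq (m s) s | s <- iota 1 i] ++ nseq (n - K) i.+1.
Proof.
rewrite entry_order_sizes.
have -> : iota 1 i.+1 = iota 1 i ++ [:: i.+1] by rewrite -[i.+1]addn1 iotaD add1n addn1.
rewrite map_cat flatten_cat /= cats0 card_empty_sites.
congr (flatten _ ++ _); apply/eq_in_map => s; rewrite mem_iota add1n => s_range.
by rewrite card_sites_of_size.
Qed.

Lemma size_flatten_nseq : size (flatten [seq nseq (m s) s | s <- iota 1 i]) = K.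
Proof.
rewrite size_flatten /shape -map_comp sumnE big_map /K /index_iota subn1 /=.
by apply: eq_big_seq => s _; rewrite /= size_nseq.
Qed.

End WordOfType.

Lemma size_weights_first (R : comNzRingType) (t : nat -> R) i (m : nat -> nat) :
  map (size_weight t i.+1 \o Some)
      (flatten [seq nseq (m s) s | s <- iota 1 i] ++ nseq (m i.+1).+1 i.+1) =
  flatten [seq nseq (m j + (j == i.+1)) (t j) | j <- iota 1 i.+1].
Proof.
have -> : iota 1 i.+1 = iota 1 i ++ [:: i.+1] by rewrite -[i.+1]addn1 iotaD add1n addn1.
rewrite !map_cat flatten_cat /= cats0 eqxx addn1 map_nseq /= leqnn; congr (_ ++ _).
rewrite map_flatten -map_comp; congr flatten; apply/eq_in_map => s.
rewrite mem_iota add1n => /andP[s_gt0 lt_si] /=.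
by rewrite map_nseq /= s_gt0 (ltnW lt_si) (ltn_eqF lt_si) addn0.
Qed.

Theorem lemma7p1 (R : comNzRingType) (t : nat -> R) (n i : nat) (m : nat -> nat)
  (u : 'I_n -> option nat) :
  0 < n -> 1 <= i -> has_type i m u -> 0 < m i ->
  let c := \sum_(1 <= j < i.+1) m j in
  c <= n ->
  (\sum_(q : {set 'I_n} | #|q| == c) qweight t i u q =
   hsym (n - c)
     (flatten [seq nseq (m j + (j == i)) (t j) | j <- iota 1 i]))%R.
Proof.
move=> _; case: i => // i _ u_type _ c le_cn.
set K := \sum_(1 <= s < i.+1) m s.
have c_split : c = K + m i.+1 by rewrite /c big_nat_recr.
have sizes := entry_sizes_of_type u_type.
have size_entries : size (map snd (entry_order i.+1 u)) = n.
  by rewrite sizes size_cat size_flatten_nseq size_nseq; lia.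
rewrite (eq_bigr _ (fun q _ => qweightE t i.+1 u q)) -(eq_bigl _ _ (admissible_empty c)).
rewrite (@queue_sum _ _ _ (erefl : size_weight t i.+1 None = 1%R) _ set0 _ c (sub0set _));
  last by rewrite -(size_map snd) size_entries.
rewrite state_weight_empty // visited_empty setC0 cardsT card_ord mul1r.
rewrite skip_poly_hsym ?size_entries ?le_cn ?leqnn //.
have [-> | lt_cn] := eqVneq c n; first by rewrite subnn !hsym0.
have {}lt_cn : c < n by rewrite ltn_neqAle lt_cn le_cn.
rewrite sizes take_cat size_flatten_nseq (_ : c.+1 < K = false); last by lia.
by rewrite (_ : c.+1 - K = (m i.+1).+1) ?take_nseq ?size_weights_first //; lia.
Qed.
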